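(* For every $l\ge1$ and every positive integer $K$, $$c'_{l,K}\le \liminf_{n\to\infty} g(n)^{1/n}\le \limsup_{n\to\infty} g(n)^{1/n}\le c_{l,K}\cdot 2^{\eta_{l,K}},$$ where $$c'_{l,K}=\prod_{i=1}^K R'_l(i)^{\frac{1}{i(i+1)}\prod_{j=1}^l(1-\frac1{p_j})},\quad c_{l,K}=\prod_{i=1}^K R_l(i)^{\frac{1}{i(i+1)}\prod_{j=1}^l(1-\frac1{p_j})},$$ $$\eta_{l,K}=1-\sum_{i=1}^K\frac{1}{i(i+1)}\prod_{j=1}^l\left(1-\frac1{p_j}\right)|M_l(i)|.$$
   Context: A set of positive integers is primitive if no element divides another. $g(n)$ is the number of primitive subsets of $\{1,\dots,n\}$ (including the empty set). Let $p_1<p_2<\dots$ be the primes and $q=p_{l+1}$. $M_l$ is the set of positive integers all of whose prime factors lie in $\{p_1,\dots,p_l\}$, $M_l(x)=\{m\in M_l:m\le x\}$ ordered by divisibility. $R_l(i)$ is the number of antichains (including the empty one) of $M_l(i)$, and $R'_l(i)$ is the number of antichains of $M_l(i)$ all of whose elements are larger than $i/q$. *)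

From mathcomp Require Import all_boot.
From Stdlib Require Import Reals.

Set Implicit Arguments.
Unset Strict Implicit.
Unset Printing Implicit Defensive.

(* next prime after p: the first prime in p+1 .. p+p! (Euclid: such a prime exists). *)
Definition next_prime (p : nat) : nat :=
  head 0 [seq r <- iota p.+1 (p`!) | prime r].

(* nth_prime j = p_j (1-indexed): p_1 = 2, p_2 = 3, ... *)
Definition nth_prime (j : nat) : nat := iter j next_prime 1.

Definition inM (l m : nat) : bool :=
  (0 < m) && all (fun r => r \in [seq nth_prime j | j <- iota 1 l]) (primes m).

Definition primitive_set (i : nat) (A : {set 'I_i.+1}) : bool :=
  [forall x in A, forall y in A, ((x : nat) %| y) ==> (x == y)].

Definition n_antichains (i : nat) (P : nat -> bool) : nat :=
  #|[set A : {set 'I_i.+1} |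
      [forall x in A, (0 < (x : nat)) && P x] && primitive_set A]|.

Definition g (n : nat) : nat := n_antichains n (fun _ => true).

Definition R_l (l i : nat) : nat := n_antichains i (inM l).

(* R'_l(i): antichains of M_l(i) with all elements > i/q, q = p_{l+1};
   m > i/q  <=>  i < m*q *)
Definition R'_l (l i : nat) : nat :=
  n_antichains i (fun m => inM l m && (i < m * nth_prime l.+1)).

Definition card_M (l i : nat) : nat :=
  #|[set m : 'I_i.+1 | inM l m]|.

Open Scope R_scope.

Fixpoint prod1 (f : nat -> R) (K : nat) : R :=
  match K with O => 1 | S k => prod1 f k * f (S k) end.

Fixpoint sum1 (f : nat -> R) (K : nat) : R :=
  match K with O => 0 | S k => sum1 f k + f (S k) end.

Definition dens (l : nat) : R := prod1 (fun j => 1 - / INR (nth_prime j)) l.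

Definition expo (l i : nat) : R := / (INR i * INR (S i)) * dens l.

Definition c_lK (l K : nat) : R :=
  prod1 (fun i => Rpower (INR (R_l l i)) (expo l i)) K.

Definition c'_lK (l K : nat) : R :=
  prod1 (fun i => Rpower (INR (R'_l l i)) (expo l i)) K.

Definition eta_lK (l K : nat) : R :=
  1 - sum1 (fun i => expo l i * INR (card_M l i)) K.

Definition groot (n : nat) : R := Rpower (INR (g n)) (/ INR n).

Close Scope R_scope.

(* Write [x] in [1..n] as its [p_1..p_l]-smooth part times its rough part [m].  The
   elements with rough part [m] form a copy of [M_l(n/m)], so antichains of [1..n] are at
   most products over [m] of [R_l(n/m)], times [2^(#elements)] for the blocks with
   [n/m > K].  Conversely the elements [m * a] with [a > (n/m)/q] are incomparable with
   all other blocks, so products of the [R'_l(n/m)] bound [g(n)] from below.  By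
   periodicity of coprimality modulo [P = p_1 ... p_l], the number of rough [m] with
   [n/m = i] is [n * prod_j (1 - 1/p_j) / (i(i+1)) + O(P)]; take logarithms and divide
   by [n]. *)

From mathcomp Require Import all_boot zify.
Set Implicit Arguments.
Unset Strict Implicit.
Unset Printing Implicit Defensive.

(** * The primes [p_1 < p_2 < ...] *)

Lemma head_filter_prime_leq a k r :
  r \in [seq x <- iota a k | prime x] -> head 0 [seq x <- iota a k | prime x] <= r.
Proof.
elim: k a => [|k IH] a //=; case: ifP => pa /=; last exact: IH.
by rewrite inE => /orP[/eqP-> // | ]; rewrite mem_filter mem_iota => /and3P[_ ? _]; lia.
Qed.

(* Euclid: a prime factor of [p! + 1] lies in [p+1 .. p+p!]. *)
Lemma next_primeP p : 0 < p ->
  [/\ prime (next_prime p), p < next_prime p &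
      forall r, prime r -> p < r -> next_prime p <= r].
Proof.
move=> p_gt0; rewrite /next_prime; set s := [seq x <- iota p.+1 p`! | prime x].
have [r pr r_dvd] : {r | prime r & r %| p`! + 1} by apply: pdivP; rewrite addn1 ltnS fact_gt0.
have p_lt_r : p < r.
  rewrite ltnNge; apply/negP => r_le_p.
  by move: r_dvd; rewrite dvdn_addr ?dvdn_fact ?prime_gt0 // gtnNdvd ?prime_gt1.
have r_in_s : r \in s.
  have : r <= p`! + 1 by apply: dvdn_leq; rewrite // addn1.
  by rewrite mem_filter pr mem_iota p_lt_r /=; lia.
have : head 0 s \in s by case: s r_in_s => //= x s' _; rewrite mem_head.
rewrite mem_filter mem_iota => /and3P[ph p_lt_h h_lt]; split=> // r' pr' p_lt_r'.
rewrite leqNgt; apply/negP => r'_lt_h.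
have : r' \in s.
  by rewrite mem_filter pr' mem_iota p_lt_r' /=; lia.
by move/head_filter_prime_leq; rewrite -/s leqNgt r'_lt_h.
Qed.

Lemma nth_primeS j : nth_prime j.+1 = next_prime (nth_prime j).
Proof. by []. Qed.

Lemma nth_prime_gt0 j : 0 < nth_prime j.
Proof.
elim: j => // j IH; rewrite nth_primeS.
by case: (next_primeP IH) => ? _ _; exact: prime_gt0.
Qed.

Lemma nth_prime_prime j : 0 < j -> prime (nth_prime j).
Proof. by case: j => // j _; case: (next_primeP (nth_prime_gt0 j)). Qed.

Lemma nth_prime_ltS j : nth_prime j < nth_prime j.+1.
Proof. by case: (next_primeP (nth_prime_gt0 j)). Qed.

Lemma leq_nth_prime i j : i <= j -> nth_prime i <= nth_prime j.
Proof.
elim: j => [|j IH]; first by rewrite leqn0 => /eqP->.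
rewrite leq_eqVlt ltnS => /orP[/eqP-> // | /IH le_ij].
exact: leq_trans le_ij (ltnW (nth_prime_ltS j)).
Qed.

Definition first_primes (l : nat) : seq nat := [seq nth_prime j | j <- iota 1 l].

Definition pi_first (l : nat) : nat_pred := [pred r | r \in first_primes l].

Lemma inM_pnat l m : inM l m = (pi_first l).-nat m.
Proof. by []. Qed.

Lemma mem_first_primes_prime l r : r \in first_primes l -> prime r.
Proof. by case/mapP => j; rewrite mem_iota => /andP[j_gt0 _] ->; exact: nth_prime_prime. Qed.

Lemma first_primesS l : first_primes l.+1 = rcons (first_primes l) (nth_prime l.+1).
Proof. by rewrite /first_primes -[l.+1]addn1 iotaD map_cat cats1 add1n /= addn1. Qed.

Lemma mem_first_primes_leq l r : r \in first_primes l -> r <= nth_prime l.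
Proof. by case/mapP => j; rewrite mem_iota => /andP[_ j_le] ->; apply: leq_nth_prime; lia. Qed.

Lemma nth_primeS_notin l : nth_prime l.+1 \notin first_primes l.
Proof. by apply/negP => /mem_first_primes_leq; rewrite leqNgt nth_prime_ltS. Qed.

Lemma prime_lt_nth_primeS j r : prime r -> r < nth_prime j.+1 -> r \in first_primes j.
Proof.
move=> pr; elim: j => [|j IH] r_lt.
  by have [_ _ /(_ r pr (prime_gt1 pr))] := next_primeP (isT : 0 < 1); move: r_lt => /= ; lia.
have r_le : r <= nth_prime j.+1.
  rewrite leqNgt; apply/negP => lt_r.
  by have [_ _ /(_ r pr lt_r)] := next_primeP (nth_prime_gt0 j.+1); rewrite -nth_primeS; lia.
rewrite first_primesS mem_rcons inE.
by move: r_le; rewrite leq_eqVlt => /orP[-> // | /IH ->]; rewrite orbT.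
Qed.

Lemma nth_primeS_leq_prime l r : prime r -> r \notin first_primes l -> nth_prime l.+1 <= r.
Proof. by move=> pr; apply: contraR; rewrite -ltnNge; exact: prime_lt_nth_primeS. Qed.

Definition primorial (l : nat) : nat := \prod_(r <- first_primes l) r.

Lemma primorial_gt0 l : 0 < primorial l.
Proof.
by rewrite /primorial big_seq prodn_cond_gt0 // => r /mem_first_primes_prime/prime_gt0.
Qed.

Lemma primorialS l : primorial l.+1 = primorial l * nth_prime l.+1.
Proof. by rewrite /primorial first_primesS -cats1 big_cat big_seq1. Qed.

Lemma prime_dvd_primorial l r : prime r -> (r %| primorial l) = (r \in first_primes l).
Proof.
move=> pr; elim: l => [|l IH].
  by rewrite /primorial big_nil dvdn1; apply/negbTE; move: pr; case: eqP => // ->.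
rewrite primorialS Euclid_dvdM // IH first_primesS mem_rcons inE orbC.
by rewrite dvdn_prime2 ?nth_prime_prime.
Qed.

Lemma coprime_primorial_nth_primeS l : coprime (primorial l) (nth_prime l.+1).
Proof.
rewrite coprime_sym prime_coprime ?nth_prime_prime // prime_dvd_primorial ?nth_prime_prime //.
exact: nth_primeS_notin.
Qed.

Lemma coprime_primorial l m : 0 < m -> coprime m (primorial l) = (pi_first l)^'.-nat m.
Proof.
move=> m_gt0; rewrite coprime_sym coprime_pi' ?primorial_gt0 //.
apply: eq_pnat => r; rewrite !inE mem_primes primorial_gt0 /=.
case pr: (prime r); first by rewrite prime_dvd_primorial.
by apply/esym/negP => /mem_first_primes_prime; rewrite pr.
Qed.

(** * Antichains of a relation on a finite set *)

Section Antichains.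
Variables (T : finType) (r : rel T).

Definition antichains (D : {set T}) : {set {set T}} :=
  [set A : {set T} | (A \subset D) && [forall x in A, forall y in A, r x y ==> (x == y)]].

Lemma antichainsP (D A : {set T}) :
  reflect (A \subset D /\ {in A &, forall x y, r x y -> x = y}) (A \in antichains D).
Proof.
rewrite inE; apply: (iffP andP) => -[AD antiA]; split=> //.
  move=> x y xA yA rxy; apply/eqP.
  by move/forall_inP: antiA => /(_ x xA)/forall_inP/(_ y yA)/implyP; apply.
by apply/forall_inP => x xA; apply/forall_inP => y yA; apply/implyP => /(antiA x y xA yA) ->.
Qed.

Lemma set0_in_antichains (D : {set T}) : set0 \in antichains D.
Proof. by apply/antichainsP; split=> [|x y]; rewrite ?sub0set ?inE. Qed.

Lemma card_antichains_gt0 (D : {set T}) : 0 < #|antichains D|.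
Proof. by apply/card_gt0P; exists set0; exact: set0_in_antichains. Qed.

Lemma antichains_sub (D D' A B : {set T}) :
  A \in antichains D -> B \subset A -> B \subset D' -> B \in antichains D'.
Proof.
move=> /antichainsP[_ antiA] BA BD'; apply/antichainsP; split=> // x y xB yB.
by apply: antiA; exact: (subsetP BA).
Qed.

Lemma antichainsS (D1 D2 : {set T}) : D1 \subset D2 -> #|antichains D1| <= #|antichains D2|.
Proof.
move=> D12; apply/subset_leq_card/subsetP => A A_anti.
have [AD1 _] := antichainsP _ _ A_anti.
exact: antichains_sub A_anti _ (subset_trans AD1 D12).
Qed.

Lemma card_antichains_leq_exp (D : {set T}) : #|antichains D| <= 2 ^ #|D|.
Proof.
rewrite -card_powerset; apply/subset_leq_card/subsetP => A /antichainsP[AD _].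
by rewrite powersetE.
Qed.

Lemma card_antichains_setID (D E : {set T}) :
  #|antichains D| <= #|antichains (D :&: E)| * #|antichains (D :\: E)|.
Proof.
rewrite -cardsX.
have split_inj : injective (fun A : {set T} => (A :&: E, A :\: E)).
  by move=> A B [AE AnE]; rewrite -(setID A E) -(setID B E) AE AnE.
rewrite -(card_imset _ split_inj); apply/subset_leq_card/subsetP => _ /imsetP[A A_anti ->].
have [AD _] := antichainsP _ _ A_anti.
rewrite in_setX /=; apply/andP; split; apply: (antichains_sub A_anti).
- exact: subsetIl.
- exact: setSI.
- exact: subsetDl.
- exact: setSD.
Qed.

Lemma card_antichains_setID_incomparable (D E : {set T}) :
  {in D :&: E & D :\: E, forall x y, ~~ r x y && ~~ r y x} ->
  #|antichains (D :&: E)| * #|antichains (D :\: E)| <= #|antichains D|.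
Proof.
move=> incomp; rewrite -cardsX.
have parts (X Y : {set T}) : X \subset D :&: E -> Y \subset D :\: E ->
    (X :|: Y) :&: E = X /\ (X :|: Y) :\: E = Y.
  move=> XDE YDE; have XE : X \subset E := subset_trans XDE (subsetIr D E).
  have YE : [disjoint Y & E].
    by rewrite disjoint_subset; apply/subsetP => y /(subsetP YDE); rewrite !inE => /andP[].
  rewrite setIUl setDUl (setIidPl XE) (disjoint_setI0 YE) (setDidPl YE).
  by move: XE; rewrite -setD_eq0 => /eqP->; rewrite setU0 set0U.
have union_inj : {in setX (antichains (D :&: E)) (antichains (D :\: E)) &,
                   injective (fun p => p.1 :|: p.2)}.
  move=> [X Y] [X' Y']; rewrite !in_setX /= => /andP[/antichainsP[XDE _] /antichainsP[YDE _]].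
  move=> /andP[/antichainsP[X'DE _] /antichainsP[Y'DE _]] /= eqU.
  have [eX eY] := parts _ _ XDE YDE; have [eX' eY'] := parts _ _ X'DE Y'DE.
  by congr pair; [rewrite -eX -eX' eqU | rewrite -eY -eY' eqU].
rewrite -(card_in_imset union_inj); apply/subset_leq_card/subsetP => _ /imsetP[[X Y] XY ->].
move: XY; rewrite in_setX /= => /andP[/antichainsP[XDE antiX] /antichainsP[YDE antiY]].
apply/antichainsP; split.
  by rewrite subUset (subset_trans XDE (subsetIl _ _)) (subset_trans YDE (subsetDl _ _)).
move=> x y; rewrite !inE => /orP[xX|xY] /orP[yX|yY] rxy.
- exact: antiX.
- by have := incomp x y (subsetP XDE x xX) (subsetP YDE y yY); rewrite rxy.
- by have := incomp y x (subsetP XDE y yX) (subsetP YDE x xY); rewrite rxy andbF.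
- exact: antiY.
Qed.

End Antichains.

Lemma card_antichains_inj (T1 T2 : finType) (r1 : rel T1) (r2 : rel T2)
    (D1 : {set T1}) (D2 : {set T2}) (f : T1 -> T2) :
  {in D1 &, injective f} -> f @: D1 \subset D2 ->
  {in D1 &, forall x y, r2 (f x) (f y) -> r1 x y} ->
  #|antichains r1 D1| <= #|antichains r2 D2|.
Proof.
move=> f_inj fD12 f_refl.
have img_inj : {in antichains r1 D1 &, injective (fun A : {set T1} => f @: A)}.
  move=> A B /antichainsP[AD1 _] /antichainsP[BD1 _] fAB.
  apply/setP => x; apply/idP/idP => xX.
    have /imsetP[y yB /f_inj fxy] : f x \in f @: B by rewrite -fAB imset_f.
    by rewrite fxy //; [exact: (subsetP AD1) | exact: (subsetP BD1)].
  have /imsetP[y yA /f_inj fxy] : f x \in f @: A by rewrite fAB imset_f.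
  by rewrite fxy //; [exact: (subsetP BD1) | exact: (subsetP AD1)].
rewrite -(card_in_imset img_inj); apply/subset_leq_card/subsetP => _ /imsetP[A A_anti ->].
have [AD1 antiA] := antichainsP _ _ _ A_anti.
apply/antichainsP; split; first exact: subset_trans (imsetS f AD1) fD12.
move=> _ _ /imsetP[x xA ->] /imsetP[y yA ->] /(f_refl x y (subsetP AD1 x xA) (subsetP AD1 y yA)).
by move/(antiA x y xA yA) ->.
Qed.

(** * Blocks of equal rough part *)

Lemma pnat_gt0 (pi : nat_pred) n : pi.-nat n -> 0 < n.
Proof. by case/andP. Qed.

Definition divides (i : nat) : rel 'I_i.+1 := fun x y => (x : nat) %| y.

Lemma n_antichainsE i P :
  n_antichains i P = #|antichains (@divides i) [set x : 'I_i.+1 | (0 < x) && P x]|.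
Proof.
apply: eq_card => A; rewrite !inE; congr andb.
by apply/forall_inP/subsetP => sub x /sub; rewrite inE.
Qed.

Lemma n_antichains_gt0 i P : 0 < n_antichains i P.
Proof. by rewrite n_antichainsE card_antichains_gt0. Qed.

Section RoughBlocks.
Variables (l n : nat).
Local Notation pi := (pi_first l).
Local Notation q := (nth_prime l.+1).

Definition rough_blocks (s : seq nat) : {set 'I_n.+1} :=
  [set x : 'I_n.+1 | (0 < x) && (x`_pi^' \in s)].

(* In block [m], with [i = n/m], these are the [m * a] with [a > i/q]: a copy of the
   set whose antichains [R'_l l i] counts. *)
Definition top_rough_blocks (s : seq nat) : {set 'I_n.+1} :=
  [set x : 'I_n.+1 | (0 < x) && (x`_pi^' \in s) && (n %/ x`_pi^' < x`_pi * q)].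

Lemma partn_smooth_rough a m : pi.-nat a -> pi^'.-nat m -> (m * a)`_pi = a /\ (m * a)`_pi^' = m.
Proof.
move=> pi_a pi'_m; have a_gt0 := pnat_gt0 pi_a; have m_gt0 := pnat_gt0 pi'_m.
rewrite !partnM // part_p'nat // part_pnat_id // part_pnat_id //.
by rewrite part_p'nat ?pnatNK // muln1 mul1n.
Qed.

Lemma rough_mul_ord m (a : 'I_(n %/ m).+1) : 0 < m -> m * a <= n.
Proof. by move=> m_gt0; have := ltn_ord a; rewrite ltnS leq_divRL // mulnC. Qed.

Lemma card_antichains_rough_block m :
  0 < m -> #|antichains (@divides n) (rough_blocks [:: m])| <= R_l l (n %/ m).
Proof.
move=> m_gt0; rewrite /R_l n_antichainsE.
have smooth_part (x : 'I_n.+1) :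
    x \in rough_blocks [:: m] -> x`_pi <= n %/ m /\ x = x`_pi * m :> nat.
  rewrite !inE => /andP[x_gt0 /eqP rx]; have ex := esym (partnC pi x_gt0); rewrite rx in ex.
  by split=> //; rewrite leq_divRL // -ex -ltnS.
apply: (card_antichains_inj (f := fun x : 'I_n.+1 => inord (x`_pi) : 'I_(n %/ m).+1)).
- move=> x y /smooth_part[xle ex] /smooth_part[yle ey] /(congr1 val) /=.
  by rewrite !inordK ?ltnS // => exy; apply: val_inj; rewrite /= ex ey exy.
- apply/subsetP => _ /imsetP[x /smooth_part[xle _] ->].
  by rewrite inE inordK ?ltnS // part_gt0 inM_pnat part_pnat.
- move=> x y /smooth_part[xle ex] /smooth_part[yle ey].
  by rewrite /divides !inordK ?ltnS // => dvd_xy; rewrite ex ey dvdn_mul.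
Qed.

Lemma card_M_leq_rough_block m :
  pi^'.-nat m -> card_M l (n %/ m) <= #|rough_blocks [:: m]|.
Proof.
move=> pi'_m; have m_gt0 := pnat_gt0 pi'_m.
rewrite /card_M -(card_in_imset (f := fun a : 'I_(n %/ m).+1 => inord (m * a) : 'I_n.+1)).
  apply/subset_leq_card/subsetP => x /imsetP[a]; rewrite inE inM_pnat => pi_a ->.
  rewrite inE inordK ?ltnS ?rough_mul_ord // (partn_smooth_rough pi_a pi'_m).2.
  by rewrite muln_gt0 m_gt0 (pnat_gt0 pi_a) mem_seq1 eqxx.
move=> a b _ _ /(congr1 val) /=; rewrite !inordK ?ltnS ?rough_mul_ord //.
by move/eqP; rewrite eqn_pmul2l // => /eqP/val_inj.
Qed.

Lemma R'_leq_card_antichains_top_block m :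
  pi^'.-nat m -> R'_l l (n %/ m) <= #|antichains (@divides n) (top_rough_blocks [:: m])|.
Proof.
move=> pi'_m; have m_gt0 := pnat_gt0 pi'_m; rewrite /R'_l n_antichainsE.
apply: (card_antichains_inj (f := fun a : 'I_(n %/ m).+1 => inord (m * a) : 'I_n.+1)).
- move=> a b _ _ /(congr1 val) /=; rewrite !inordK ?ltnS ?rough_mul_ord //.
  by move/eqP; rewrite eqn_pmul2l // => /eqP/val_inj.
- apply/subsetP => x /imsetP[a]; rewrite inE inM_pnat => /and3P[a_gt0 pi_a a_top] ->.
  rewrite inE inordK ?ltnS ?rough_mul_ord //; have [-> ->] := partn_smooth_rough pi_a pi'_m.
  by rewrite muln_gt0 m_gt0 a_gt0 mem_seq1 eqxx a_top.
- by move=> a b _ _; rewrite /divides !inordK ?ltnS ?rough_mul_ord // dvdn_pmul2l.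
Qed.

(* If [x | y] with different rough parts, the rough quotient has a prime factor [>= q],
   so [y >= q * x > n] when [x] lies in the top part of its block. *)
Lemma top_rough_not_dvd (x y : nat) : 0 < x -> 0 < y -> y <= n ->
  x`_pi^' != y`_pi^' -> n %/ x`_pi^' < x`_pi * q -> ~~ (x %| y).
Proof.
move=> x_gt0 y_gt0 y_le rx_neq x_top; apply/negP => dvd_xy.
have [t ryE] : exists t, y`_pi^' = x`_pi^' * t.
  by exists (y`_pi^' %/ x`_pi^'); rewrite mulnC divnK // partn_dvd.
have t_gt1 : 1 < t.
  move: (part_gt0 pi^' y); rewrite ryE muln_gt0 => /andP[_].
  by case: t ryE => [|[|t]] // ryE _; rewrite ryE muln1 eqxx in rx_neq.
have pi'_t : pi^'.-nat t by apply: pnat_dvd (part_pnat pi^' y); rewrite ryE dvdn_mull.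
have q_le_t : q <= t.
  apply: leq_trans (pdiv_leq (ltnW t_gt1)); apply: nth_primeS_leq_prime (pdiv_prime t_gt1) _.
  by apply: pnatPpi pi'_t _; rewrite pi_pdiv.
have sx_le : x`_pi <= y`_pi by apply: dvdn_leq (part_gt0 _ _) (partn_dvd _ y_gt0 dvd_xy).
move: x_top; rewrite ltn_divLR ?part_gt0 // => x_top.
have : x`_pi * q * x`_pi^' <= y.
  by rewrite -(partnC pi y_gt0) ryE mulnA -(mulnAC (y`_pi)) leq_mul // leq_mul.
lia.
Qed.

Lemma rough_blocks_cons m s :
  rough_blocks (m :: s) :&: [set x : 'I_n.+1 | x`_pi^' == m] = rough_blocks [:: m] /\
  (m \notin s -> rough_blocks (m :: s) :\: [set x : 'I_n.+1 | x`_pi^' == m] = rough_blocks s).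
Proof.
split; first by apply/setP => x; rewrite !inE; case: eqP; rewrite ?andbF ?andbT ?orbT.
move=> m_notin; apply/setP => x; rewrite !inE.
by case: eqVneq => [-> | _] /=; rewrite ?(negPf m_notin) ?andbF.
Qed.

Lemma card_antichains_rough_blocks s : all (fun m => 0 < m) s ->
  #|antichains (@divides n) (rough_blocks s)| <= \prod_(m <- s) R_l l (n %/ m).
Proof.
elim: s => [_ | m s IH /andP[m_gt0 s_gt0]].
  rewrite big_nil; apply: leq_trans (card_antichains_leq_exp _ _) _.
  by rewrite (_ : rough_blocks [::] = set0) ?cards0 //; apply/setP => x; rewrite !inE andbF.
rewrite big_cons; apply: leq_trans (card_antichains_setID _ _ [set x : 'I_n.+1 | x`_pi^' == m]) _.
rewrite (rough_blocks_cons m s).1; apply: leq_mul; first exact: card_antichains_rough_block.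
apply: leq_trans (IH s_gt0); apply/antichainsS/subsetP => x.
by rewrite !inE => /and3P[rx_neq x_gt0]; rewrite x_gt0 (negPf rx_neq).
Qed.

Lemma sum_card_M_leq_rough_blocks s : uniq s -> all (fun m => pi^'.-nat m) s ->
  \sum_(m <- s) card_M l (n %/ m) <= #|rough_blocks s|.
Proof.
elim: s => [|m s IH /andP[m_notin s_uniq] /andP[pi'_m s_rough]]; first by rewrite big_nil.
have [blockE restE] := rough_blocks_cons m s.
rewrite big_cons -(cardsID [set x : 'I_n.+1 | x`_pi^' == m]) blockE (restE m_notin).
by apply: leq_add; [exact: card_M_leq_rough_block | exact: IH].
Qed.

Lemma prod_R'_leq_card_antichains_top s : uniq s -> all (fun m => pi^'.-nat m) s ->
  \prod_(m <- s) R'_l l (n %/ m) <= #|antichains (@divides n) (top_rough_blocks s)|.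
Proof.
elim: s => [|m s IH /andP[m_notin s_uniq] /andP[pi'_m s_rough]].
  by rewrite big_nil card_antichains_gt0.
set E := [set x : 'I_n.+1 | x`_pi^' == m].
have blockE : top_rough_blocks (m :: s) :&: E = top_rough_blocks [:: m].
  by apply/setP => x; rewrite !inE; case: eqP; rewrite ?andbF ?andbT ?orbT.
have restE : top_rough_blocks (m :: s) :\: E = top_rough_blocks s.
  apply/setP => x; rewrite !inE.
  by case: eqVneq => [-> | _] /=; rewrite ?(negPf m_notin) ?andbF.
rewrite big_cons; apply: leq_trans (card_antichains_setID_incomparable (E := E) _).
  by rewrite blockE restE leq_mul ?R'_leq_card_antichains_top_block ?IH.
move=> x y; rewrite blockE restE !inE.
move=> /andP[/andP[x_gt0 /eqP rx] x_top] /andP[/andP[y_gt0 ry] y_top].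
have rxy : x`_pi^' != y`_pi^' by rewrite rx; apply: contraNneq m_notin => ->.
have x_le : x <= n by rewrite -ltnS ltn_ord.
have y_le : y <= n by rewrite -ltnS ltn_ord.
by rewrite /divides !top_rough_not_dvd // eq_sym.
Qed.

End RoughBlocks.

Lemma big_count_group (R : Type) (idx : R) (op : Monoid.com_law idx)
    (s : seq nat) (h : nat -> nat) (F : nat -> R) K :
  {in s, forall m, 0 < h m <= K} ->
  \big[op/idx]_(m <- s) F (h m) =
  \big[op/idx]_(1 <= i < K.+1) iter (count (fun m => h m == i) s) (op (F i)) idx.
Proof.
move=> h_range.
transitivity (\big[op/idx]_(m <- s) \big[op/idx]_(1 <= i < K.+1 | h m == i) F i).
  apply: eq_big_seq => m /h_range hm; rewrite -big_filter.
  rewrite (@eq_filter _ _ (pred1 (h m))) => [|i]; last exact: eq_sym.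
  by rewrite filter_pred1_uniq ?iota_uniq ?mem_index_iota ?big_seq1.
rewrite (exchange_big_dep xpredT) //=; apply: eq_bigr => i _.
by rewrite big_const_seq.
Qed.

Section GroupedBounds.
Variables (l n K : nat).
Local Notation pi := (pi_first l).

Definition rough_seq : seq nat := [seq m <- iota 1 n | pi^'.-nat m & n %/ m <= K].

Definition rough_count (i : nat) : nat := count (fun m => n %/ m == i) rough_seq.

Lemma rough_seq_uniq : uniq rough_seq.
Proof. by rewrite filter_uniq ?iota_uniq. Qed.

Lemma rough_seq_rough : all (fun m => pi^'.-nat m) rough_seq.
Proof. by apply/allP => m; rewrite mem_filter => /andP[/andP[]]. Qed.

Lemma rough_seq_gt0 : all (fun m => 0 < m) rough_seq.
Proof. by apply/allP => m; rewrite mem_filter mem_iota => /and3P[_]. Qed.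

Lemma rough_seq_quot m : m \in rough_seq -> 0 < n %/ m <= K.
Proof.
by rewrite mem_filter mem_iota => /and3P[/andP[_ ->] m_gt0 m_lt]; rewrite andbT divn_gt0.
Qed.

Lemma prod_rough_seq (F : nat -> nat) :
  \prod_(m <- rough_seq) F (n %/ m) = \prod_(1 <= i < K.+1) F i ^ rough_count i.
Proof.
rewrite (big_count_group _ _ rough_seq_quot).
by apply: eq_bigr => i _; rewrite iter_muln_1.
Qed.

Lemma sum_rough_seq (F : nat -> nat) :
  \sum_(m <- rough_seq) F (n %/ m) = \sum_(1 <= i < K.+1) rough_count i * F i.
Proof.
rewrite (big_count_group _ _ rough_seq_quot).
by apply: eq_bigr => i _; rewrite iter_addn_0 mulnC.
Qed.

Lemma prod_R'_leq_g : \prod_(1 <= i < K.+1) R'_l l i ^ rough_count i <= g n.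
Proof.
rewrite -prod_rough_seq.
apply: leq_trans (prod_R'_leq_card_antichains_top n rough_seq_uniq rough_seq_rough) _.
rewrite /g n_antichainsE; apply/antichainsS/subsetP => x.
by rewrite !inE => /andP[/andP[-> _] _].
Qed.

Lemma rough_part_in_rough_seq (x : 'I_n.+1) : 0 < x -> n %/ x`_pi^' <= K -> x`_pi^' \in rough_seq.
Proof.
move=> x_gt0 quot_le; rewrite mem_filter part_pnat quot_le mem_iota part_gt0 /=.
have : x`_pi^' <= x by apply: dvdn_leq (dvdn_part _ _).
by have := ltn_ord x; lia.
Qed.

Lemma g_leq_prod_R :
  g n * 2 ^ (\sum_(1 <= i < K.+1) rough_count i * card_M l i) <=
  (\prod_(1 <= i < K.+1) R_l l i ^ rough_count i) * 2 ^ n.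
Proof.
rewrite -prod_rough_seq -sum_rough_seq.
set D := [set x : 'I_n.+1 | (0 < x) && true].
set E := [set x : 'I_n.+1 | n %/ x`_pi^' <= K].
have DE : D :&: E = rough_blocks l n rough_seq.
  apply/setP => x; rewrite !inE andbT; have [x_gt0 | //] := ltnP 0 x.
  apply/idP/idP => [quot_le | ]; first exact: rough_part_in_rough_seq.
  by move/rough_seq_quot => /andP[].
have D_le : #|D| <= n.
  have /subset_leq_card : D \subset [set~ ord0].
    by apply/subsetP => x; rewrite !inE andbT; apply: contraTneq => ->.
  by rewrite cardsC1 card_ord.
have D_split := cardsID E D.
have sumM_le := sum_card_M_leq_rough_blocks n rough_seq_uniq rough_seq_rough.
rewrite /g n_antichainsE -/D -DE in sumM_le *.
apply: leq_trans (leq_mul (card_antichains_setID _ D E) (leqnn _)) _.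
rewrite -mulnA leq_mul //.
  by rewrite DE; exact: card_antichains_rough_blocks rough_seq_gt0.
apply: leq_trans (leq_mul (card_antichains_leq_exp _ _) (leqnn _)) _.
rewrite -expnD leq_exp2l // addnC; apply: leq_trans D_le.
by rewrite -D_split leq_add2r.
Qed.

End GroupedBounds.

(** * Counting the blocks with [n / m = i] *)

Section CountCoprime.
Variable P : nat.
Hypothesis P_gt0 : 0 < P.

Definition count_coprime (x : nat) : nat := \sum_(0 <= m < x) coprime m P.

Lemma sum_bool_leq (a b : nat) (f : nat -> bool) : \sum_(a <= m < b) f m <= b - a.
Proof.
apply: leq_trans (_ : \sum_(a <= m < b) 1 <= _); first by apply: leq_sum => m _; case: (f m).
by rewrite sum_nat_const_nat muln1.
Qed.

Lemma count_coprime_leq x : count_coprime x <= x.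
Proof. by have := sum_bool_leq 0 x (coprime^~ P); rewrite subn0. Qed.

Lemma totient_leq : totient P <= P.
Proof. by rewrite totient_count_coprime; have := sum_bool_leq 0 P (coprime P); rewrite subn0. Qed.

Lemma count_coprimeDP x : count_coprime (x + P) = count_coprime x + totient P.
Proof.
rewrite /count_coprime addnC (big_cat_nat _ (n := P)) ?leq_addr //= addnC.
congr (_ + _); last first.
  by rewrite totient_count_coprime; apply: eq_bigr => m _; rewrite coprime_sym.
rewrite -{1}[P]add0n big_addn addKn; apply: eq_bigr => m _.
by rewrite -coprime_modl modnDr coprime_modl.
Qed.

Lemma count_coprimeDMP r k : count_coprime (r + k * P) = count_coprime r + k * totient P.
Proof.
elim: k => [|k IH]; first by rewrite !mul0n !addn0.
by rewrite mulSn (addnC P) addnA count_coprimeDP IH mulSn; lia.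
Qed.

(* Periodicity mod [P]: [count_coprime x] is [x * totient P / P] up to an error of at most [P]. *)
Lemma count_coprime_bounds x :
  count_coprime x * P <= x * totient P + P * P /\ x * totient P <= count_coprime x * P + P * P.
Proof.
have xE := divn_eq x P; set k := x %/ P in xE; set r := x %% P in xE.
have r_lt : r < P by rewrite ltn_mod.
have cE : count_coprime x = count_coprime r + k * totient P.
  by rewrite xE addnC count_coprimeDMP.
have := count_coprime_leq r; have := totient_leq.
by rewrite cE xE; split; nia.
Qed.

End CountCoprime.

Lemma sum_window (c : nat -> bool) a b N : a <= b -> b <= N ->
  \sum_(1 <= m < N.+1) (c m && (a < m <= b)) = \sum_(a.+1 <= m < b.+1) c m.
Proof.
move=> a_le b_le; have a_le_N := leq_trans a_le b_le.
rewrite (big_cat_nat _ (n := a.+1)) //= ?ltnS //.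
rewrite (big_cat_nat _ (m := a.+1) (n := b.+1)) //= ?ltnS //.
rewrite big1_seq ?add0n => [|m]; last first.
  rewrite mem_index_iota => m_range; suff -> : (a < m <= b) = false by rewrite andbF.
  by apply/negbTE/negP => /andP; lia.
rewrite [X in _ + X]big1_seq ?addn0 => [|m]; last first.
  rewrite mem_index_iota => m_range; suff -> : (a < m <= b) = false by rewrite andbF.
  by apply/negbTE/negP => /andP; lia.
apply: eq_big_nat => m m_range; suff -> : a < m <= b by rewrite andbT.
by apply/andP; split; lia.
Qed.

Lemma div_eq_window n m i : 0 < m -> 0 < i -> (n %/ m == i) = (n %/ i.+1 < m <= n %/ i).
Proof.
move=> m_gt0 i_gt0; rewrite eqn_leq leq_divRL // -ltnS ltn_divLR // ltn_divLR // leq_divRL //.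
by apply/andP/andP => -[]; lia.
Qed.

Lemma rough_count_sum l n K i : i <= K ->
  rough_count l n K i = \sum_(1 <= m < n.+1) (coprime m (primorial l) && (n %/ m == i)).
Proof.
move=> i_le; rewrite /rough_count /rough_seq count_filter -sum1_count big_mkcond /index_iota subn1.
apply: eq_big_seq => m; rewrite mem_iota => /andP[m_gt0 _] /=.
rewrite coprime_primorial //; case: eqP => [-> | _]; last by rewrite andbF.
by rewrite i_le andbT.
Qed.

(* The blocks with [n / m = i] are the rough [m] in the window [n/(i+1) < m <= n/i]. *)
Lemma rough_count_window l n K i : 0 < i -> i <= K ->
  rough_count l n K i + count_coprime (primorial l) (n %/ i.+1).+1 =
  count_coprime (primorial l) (n %/ i).+1.
Proof.
move=> i_gt0 i_le; have a_le : n %/ i.+1 <= n %/ i by apply: leq_div2l.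
rewrite rough_count_sum //.
under eq_big_nat => m /andP[m_gt0 _] do rewrite div_eq_window //.
rewrite sum_window ?leq_div // /count_coprime addnC.
by rewrite -(big_cat_nat _ (n := (n %/ i.+1).+1)).
Qed.

(** * Real estimates *)

(* Imported only here: Stdlib's [Reals] rebinds [^] in [nat_scope] to [Nat.pow]. *)
From Stdlib Require Import Reals Lra Psatz.

Open Scope R_scope.

Lemma INR_leq (a b : nat) : (a <= b)%nat -> INR a <= INR b.
Proof. by move/leP; exact: le_INR. Qed.

Lemma INR_ltn (a b : nat) : (a < b)%nat -> INR a < INR b.
Proof. by move/ltP; exact: lt_INR. Qed.

Lemma INR_gt0 (a : nat) : (0 < a)%nat -> 0 < INR a.
Proof. by move/ltP; exact: lt_0_INR. Qed.

Lemma INR_divn_bounds (n m : nat) : (0 < m)%nat ->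
  INR (n %/ m) <= INR n / INR m < INR (n %/ m) + 1.
Proof.
move=> m_gt0; have m_pos := INR_gt0 m_gt0.
have lo := INR_leq (leq_divM n m); have hi := INR_ltn (ltn_ceil n m_gt0).
rewrite !mult_INR S_INR in lo hi.
have zE : INR n / INR m * INR m = INR n by field; lra.
split; nra.
Qed.

Lemma dens_totient l : dens l = INR (totient (primorial l)) / INR (primorial l).
Proof.
elim: l => [|l IH]; first by rewrite /dens /primorial big_nil /=; field.
have p_prime := nth_prime_prime (isT : (0 < l.+1)%nat).
have p_pos := INR_gt0 (prime_gt0 p_prime).
have P_pos := INR_gt0 (primorial_gt0 l).
rewrite /dens /= -/(dens l) -nth_primeS IH primorialS.
rewrite totient_coprime ?coprime_primorial_nth_primeS //.
have p_ge1 : (1 <= nth_prime l.+1)%coq_nat by apply/leP; exact: prime_gt0.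
rewrite (totient_prime p_prime) !mult_INR -subn1 minus_INR //.
by rewrite /= -!nth_primeS; field; lra.
Qed.

Lemma dens_bounds l : 0 <= dens l <= 1.
Proof.
have P_pos := INR_gt0 (primorial_gt0 l).
have := INR_leq (totient_leq (primorial l)); have := pos_INR (totient (primorial l)).
rewrite dens_totient; split.
  by apply: Rmult_le_pos; [lra | apply/Rlt_le/Rinv_0_lt_compat].
by apply: (Rmult_le_reg_r (INR (primorial l))) => //; rewrite /Rdiv Rmult_assoc Rinv_l; lra.
Qed.

Lemma count_coprime_near P x : (0 < P)%nat ->
  INR x * (INR (totient P) / INR P) - INR P <= INR (count_coprime P x) <=
  INR x * (INR (totient P) / INR P) + INR P.
Proof.
move=> P_gt0; have P_pos := INR_gt0 P_gt0.
have [lo hi] := count_coprime_bounds P_gt0 x.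
move/INR_leq: lo; move/INR_leq: hi; rewrite !plus_INR !mult_INR => hi lo.
have -> : INR x * (INR (totient P) / INR P) = INR x * INR (totient P) / INR P by field; lra.
set c := INR (count_coprime P x) in lo hi *; set t := INR x * INR (totient P) in lo hi *.
have tE : t / INR P * INR P = t by field; lra.
split; nra.
Qed.

Lemma divn_window_near n i : (0 < i)%nat ->
  INR n / (INR i * INR i.+1) - 1 <= INR (n %/ i) - INR (n %/ i.+1) <=
  INR n / (INR i * INR i.+1) + 1.
Proof.
move=> i_gt0; have i_pos := INR_gt0 i_gt0; have iS_pos := INR_gt0 (ltn0Sn i).
have -> : INR n / (INR i * INR i.+1) = INR n / INR i - INR n / INR i.+1.
  by rewrite S_INR; field; lra.
have := INR_divn_bounds n i_gt0; have := INR_divn_bounds n (ltn0Sn i); lra.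
Qed.

Section RoughCountNear.
Variables (l n K i : nat).
Hypotheses (i_gt0 : (0 < i)%nat) (i_le : (i <= K)%nat).

(* Each of the two counts of coprimes is off by at most [P], the window by [dens l <= 1]. *)
Lemma rough_count_near :
  INR n * expo l i - (2 * INR (primorial l) + 1) <= INR (rough_count l n K i) <=
  INR n * expo l i + (2 * INR (primorial l) + 1).
Proof.
set P := primorial l; set d := INR (totient P) / INR P.
have dE : dens l = d by exact: dens_totient.
have [d_ge0 d_le1] := dens_bounds l; rewrite dE in d_ge0 d_le1.
have /(congr1 INR) := rough_count_window l n i_gt0 i_le; rewrite plus_INR => windowE.
have [lo_b hi_b] := count_coprime_near (n %/ i).+1 (primorial_gt0 l).
have [lo_a hi_a] := count_coprime_near (n %/ i.+1).+1 (primorial_gt0 l).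
have [lo_w hi_w] := divn_window_near n i_gt0.
rewrite !S_INR -/P -/d in lo_b hi_b lo_a hi_a.
have expoE : INR n * expo l i = INR n / (INR i * INR i.+1) * d.
  by rewrite /expo dE /Rdiv; ring.
set w := INR n / (INR i * INR i.+1) in lo_w hi_w expoE.
have w_lo : 0 <= (INR (n %/ i) - INR (n %/ i.+1) - (w - 1)) * d by apply: Rmult_le_pos; lra.
have w_hi : 0 <= (w + 1 - (INR (n %/ i) - INR (n %/ i.+1))) * d by apply: Rmult_le_pos; lra.
rewrite -/P in windowE; rewrite expoE; split; lra.
Qed.

End RoughCountNear.

Lemma sum1_le f g K : (forall i, (0 < i)%nat -> (i <= K)%nat -> f i <= g i) ->
  sum1 f K <= sum1 g K.
Proof.
elim: K => [|K IH] fg /=; first lra.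
apply: Rplus_le_compat; last exact: fg.
by apply: IH => i i_gt0 i_le; apply: fg; lia.
Qed.

Lemma sum1_ge0 f K : (forall i, 0 <= f i) -> 0 <= sum1 f K.
Proof. by move=> f_ge0; elim: K => [|K IH] /=; [lra | have := f_ge0 K.+1; lra]. Qed.

Lemma sum1_lin a b f g K : sum1 (fun i => a * f i + b * g i) K = a * sum1 f K + b * sum1 g K.
Proof. by elim: K => [|K IH] /=; [ring | rewrite IH; ring]. Qed.

Lemma prod1_exp f K : prod1 (fun i => exp (f i)) K = exp (sum1 f K).
Proof. by elim: K => [|K IH] /=; [rewrite exp_0 | rewrite IH exp_plus]. Qed.

Lemma INR_sum1 (F : nat -> nat) K : INR (\sum_(1 <= i < K.+1) F i) = sum1 (fun i => INR (F i)) K.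
Proof.
elim: K => [|K IH]; first by rewrite big_geq.
by rewrite big_nat_recr //= plus_INR IH.
Qed.

Lemma ln_le_ln x y : 0 < x -> x <= y -> ln x <= ln y.
Proof. by move=> x_pos [lt_xy | ->]; [left; exact: ln_increasing | lra]. Qed.

Lemma exp_le_exp x y : x <= y -> exp x <= exp y.
Proof. by move=> [lt_xy | ->]; [left; exact: exp_increasing | lra]. Qed.

Lemma ln_INR_ge0 (a : nat) : (0 < a)%nat -> 0 <= ln (INR a).
Proof. by move=> a_gt0; rewrite -ln_1; apply: ln_le_ln; [lra | apply: (INR_leq a_gt0)]. Qed.

Lemma INR_expn (m k : nat) : INR (expn m k) = INR m ^ k.
Proof. by elim: k => [|k IH] //; rewrite expnS mult_INR IH. Qed.

Lemma ln_INR_prod_expn (F c : nat -> nat) K : (forall i, (0 < F i)%nat) ->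
  ln (INR (\prod_(1 <= i < K.+1) expn (F i) (c i))) = sum1 (fun i => INR (c i) * ln (INR (F i))) K.
Proof.
move=> F_gt0; elim: K => [|K IH]; first by rewrite big_geq //= ln_1.
have pow_pos i : 0 < INR (F i) ^ c i by apply/pow_lt/INR_gt0.
rewrite big_nat_recr //= mult_INR ln_mult; last by rewrite INR_expn.
- by rewrite IH INR_expn ln_pow //; exact: INR_gt0.
- by apply: INR_gt0; rewrite prodn_gt0 // => i; rewrite expn_gt0 F_gt0.
Qed.

Lemma ln_g_lower l K n :
  INR n * sum1 (fun i => expo l i * ln (INR (R'_l l i))) K
  - (2 * INR (primorial l) + 1) * sum1 (fun i => ln (INR (R'_l l i))) K <= ln (INR (g n)).
Proof.
set C := 2 * INR (primorial l) + 1.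
have R'_gt0 i : (0 < R'_l l i)%nat by exact: n_antichains_gt0.
have prod_gt0 : (0 < \prod_(1 <= i < K.+1) expn (R'_l l i) (rough_count l n K i))%nat.
  by rewrite prodn_gt0 // => i; rewrite expn_gt0 R'_gt0.
apply: Rle_trans (ln_le_ln (INR_gt0 prod_gt0) (INR_leq (prod_R'_leq_g l n K))).
rewrite ln_INR_prod_expn //.
apply: (@Rle_trans _ (sum1 (fun i => INR n * (expo l i * ln (INR (R'_l l i)))
                                   + (- C) * ln (INR (R'_l l i))) K)).
  by rewrite sum1_lin; lra.
apply: sum1_le => i i_gt0 i_le; have [lo _] := rough_count_near l n i_gt0 i_le.
by have := Rmult_le_compat_r _ _ _ (ln_INR_ge0 (R'_gt0 i)) lo; rewrite -/C; lra.
Qed.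

Lemma ln_g_upper l K n :
  ln (INR (g n)) <=
  INR n * (sum1 (fun i => expo l i * ln (INR (R_l l i))) K
           + (1 - sum1 (fun i => expo l i * INR (card_M l i)) K) * ln 2)
  + (2 * INR (primorial l) + 1) *
    (sum1 (fun i => ln (INR (R_l l i))) K + sum1 (fun i => INR (card_M l i)) K * ln 2).
Proof.
set C := 2 * INR (primorial l) + 1.
have R_gt0 i : (0 < R_l l i)%nat by exact: n_antichains_gt0.
have ln2_pos : 0 < ln 2 by have := ln_lt_2; lra.
have two_pos k : 0 < INR (expn 2 k) by apply: INR_gt0; rewrite expn_gt0.
have prod_gt0 : (0 < \prod_(1 <= i < K.+1) expn (R_l l i) (rough_count l n K i))%nat.
  by rewrite prodn_gt0 // => i; rewrite expn_gt0 R_gt0.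
have g_pos : 0 < INR (g n) by apply/INR_gt0/n_antichains_gt0.
have := INR_leq (g_leq_prod_R l n K); rewrite !mult_INR.
move/(ln_le_ln (Rmult_lt_0_compat _ _ g_pos (two_pos _))).
have prod_pos := INR_gt0 prod_gt0.
rewrite !ln_mult; try by [exact: two_pos | assumption].
have two : INR 2 = 2 by rewrite /=; lra.
rewrite ln_INR_prod_expn // !INR_expn two !ln_pow ?INR_sum1 //; try lra.
set S := sum1 (fun i => INR (_ * _)) K; set X := sum1 _ K => main.
have X_le : X <= sum1 (fun i => INR n * (expo l i * ln (INR (R_l l i)))
                                + C * ln (INR (R_l l i))) K.
  apply: sum1_le => i i_gt0 i_le; have [_ hi] := rough_count_near l n i_gt0 i_le.
  by have := Rmult_le_compat_r _ _ _ (ln_INR_ge0 (R_gt0 i)) hi; rewrite -/C; lra.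
have S_ge : sum1 (fun i => INR n * (expo l i * INR (card_M l i))
                           + (- C) * INR (card_M l i)) K <= S.
  apply: sum1_le => i i_gt0 i_le; have [lo _] := rough_count_near l n i_gt0 i_le.
  rewrite mult_INR; have := Rmult_le_compat_r _ _ _ (pos_INR (card_M l i)) lo.
  by rewrite -/C; lra.
rewrite !sum1_lin in X_le S_ge.
have := Rmult_le_compat_r _ _ _ (Rlt_le _ _ ln2_pos) S_ge.
lra.
Qed.

Lemma eventually_div_le (c eps : R) : 0 <= c -> 0 < eps ->
  exists N, forall n, (N <= n)%nat -> 0 < INR n /\ c / INR n <= eps.
Proof.
move=> c_ge0 eps_pos; have ratio_pos : 0 < eps / (c + 1) by apply: Rdiv_lt_0_compat; lra.
have [N [N_inv N_gt0]] := archimed_cor1 _ ratio_pos.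
exists N => n N_le; have N_pos : 0 < INR N by apply: lt_0_INR.
have n_pos : 0 < INR n by have := INR_leq N_le; lra.
split=> //; have inv_le : / INR n <= / INR N by apply: Rinv_le_contravar => //; exact: INR_leq.
have : c * / INR n <= c * (eps / (c + 1)) by apply: Rmult_le_compat_l; lra.
have : c * (eps / (c + 1)) <= eps.
  by rewrite (_ : c * (eps / (c + 1)) = eps - eps / (c + 1)); [lra | field; lra].
by rewrite /Rdiv; lra.
Qed.

Lemma exp_lower_eventually (A B : R) (u : nat -> R) :
  0 <= B -> (forall n, INR n * A - B <= u n) ->
  forall eps, 0 < eps -> exists N, forall n, (N <= n)%nat -> exp A - eps <= exp (/ INR n * u n).
Proof.
move=> B_ge0 u_ge eps eps_pos.
have [N N_spec] := eventually_div_le (Rmult_le_pos _ _ (Rlt_le _ _ (exp_pos A)) B_ge0) eps_pos.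
exists N => n /N_spec[n_pos small].
have : A - B / INR n <= / INR n * u n.
  rewrite (_ : A - B / INR n = / INR n * (INR n * A - B)); last by field; lra.
  by apply: Rmult_le_compat_l (u_ge n); apply/Rlt_le/Rinv_0_lt_compat.
move/exp_le_exp => le_exp; apply: Rle_trans _ _ _ _ le_exp.
rewrite /Rminus exp_plus.
have := Rmult_le_compat_l _ _ _ (Rlt_le _ _ (exp_pos A)) (exp_ineq1_le (- (B / INR n))).
by rewrite /Rdiv in small *; lra.
Qed.

(* [exp x <= 1 / (1 - x)] for [x < 1], since [exp (- x) >= 1 - x]. *)
Lemma exp_upper_eventually (A B : R) (u : nat -> R) :
  0 <= B -> (forall n, u n <= INR n * A + B) ->
  forall eps, 0 < eps -> exists N, forall n, (N <= n)%nat -> exp (/ INR n * u n) <= exp A + eps.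
Proof.
move=> B_ge0 u_le eps eps_pos; have expA_pos := exp_pos A.
have [N N_spec] := eventually_div_le (Rmult_le_pos B (exp A + eps) B_ge0 ltac:(lra)) eps_pos.
exists N => n /N_spec[n_pos small]; set x := B / INR n.
have x_ge0 : 0 <= x by apply: Rmult_le_pos => //; apply/Rlt_le/Rinv_0_lt_compat.
have x_small : x * (exp A + eps) <= eps.
  by rewrite /x (_ : B / INR n * _ = B * (exp A + eps) / INR n) //; rewrite /Rdiv; ring.
have : / INR n * u n <= A + x.
  rewrite (_ : A + x = / INR n * (INR n * A + B)); last by rewrite /x; field; lra.
  by apply: Rmult_le_compat_l (u_le n); apply/Rlt_le/Rinv_0_lt_compat.
move/exp_le_exp => le_exp; apply: Rle_trans _ _ _ le_exp _; rewrite exp_plus.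
have x_lt1 : x < 1 by nra.
have exp_x_le : exp x * (1 - x) <= 1.
  have := Rmult_le_compat_l _ _ _ (Rlt_le _ _ (exp_pos x)) (exp_ineq1_le (- x)).
  by rewrite -exp_plus Rplus_opp_r exp_0; lra.
apply: (Rmult_le_reg_r (1 - x)); first lra.
have := Rmult_le_compat_l _ _ _ (Rlt_le _ _ expA_pos) exp_x_le; lra.
Qed.

Lemma c'_lK_exp l K : c'_lK l K = exp (sum1 (fun i => expo l i * ln (INR (R'_l l i))) K).
Proof. by rewrite /c'_lK /Rpower prod1_exp. Qed.

Lemma c_lK_eta_exp l K :
  c_lK l K * Rpower 2 (eta_lK l K) =
  exp (sum1 (fun i => expo l i * ln (INR (R_l l i))) K
       + (1 - sum1 (fun i => expo l i * INR (card_M l i)) K) * ln 2).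
Proof. by rewrite /c_lK /Rpower prod1_exp -exp_plus. Qed.

Close Scope R_scope.
Unset Implicit Arguments.

(* The bounds hold for every [l] and [K]. *)
Theorem mainTheorem10 (l K : nat) (hl : (1 <= l)%N) (hK : (1 <= K)%N) :
  (forall eps : R, (0 < eps)%R ->
     exists N : nat, forall n : nat, (N <= n)%N ->
       (c'_lK l K - eps <= groot n)%R) /\
  (forall eps : R, (0 < eps)%R ->
     exists N : nat, forall n : nat, (N <= n)%N ->
       (groot n <= c_lK l K * Rpower 2 (eta_lK l K) + eps)%R).
Proof.
have C_ge0 : (0 <= 2 * INR (primorial l) + 1)%R by have := pos_INR (primorial l); lra.
have ln_R_ge0 i : (0 <= ln (INR (R_l l i)))%R by apply/ln_INR_ge0/n_antichains_gt0.
have ln_R'_ge0 i : (0 <= ln (INR (R'_l l i)))%R by apply/ln_INR_ge0/n_antichains_gt0.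
have ln2_pos : (0 < ln 2)%R by have := ln_lt_2; lra.
split.
- rewrite c'_lK_exp; apply: exp_lower_eventually (ln_g_lower l K).
  by apply/Rmult_le_pos/sum1_ge0.
- rewrite c_lK_eta_exp; apply: exp_upper_eventually (ln_g_upper l K).
  apply: Rmult_le_pos => //; apply: Rplus_le_le_0_compat; first exact: sum1_ge0.
  by apply: Rmult_le_pos; [apply: sum1_ge0 => i; exact: pos_INR | lra].
Qed.
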